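(* Let $\mathcal F$ be a saturated fusion system over a finite $p$-group $S$ and $R$ a commutative ring with $1$. The Mackey algebra $\mu_R(\mathcal F)$ has an $R$-basis $\mathcal B=\bigsqcup_{A,B\le S}\mathcal B_{(A,B)}$, where $$\mathcal B_{(A,B)}=\bigsqcup_{\substack{C\le A\\ \text{up to }A\text{-conjugacy}}}\ \bigsqcup_{\varphi\in[\operatorname{Aut}_B(B)\backslash\operatorname{Hom}_{\mathcal F}(C,B)/\operatorname{Aut}_A(C)]}\{I^B_{\overline\varphi(C)}c_{\overline\varphi}R^A_C\}.$$ In particular $\mu_R(\mathcal F)$ is finitely generated as an $R$-module.
   Context: A fusion system $\mathcal F$ over $S$: category with objects the subgroups of $S$, morphisms injective homomorphisms, containing all conjugations $x\mapsto sxs^{-1}$ ($s\in S$), with each morphism's isomorphism onto its image and its inverse in $\mathcal F$; saturated. $\operatorname{Aut}_T(P)=\{c_x|_P:x\in N_T(P)\}$, $c_x(y)=xyx^{-1}$. $[\operatorname{Aut}_B(B)\backslash\operatorname{Hom}_{\mathcal F}(C,B)/\operatorname{Aut}_A(C)]$ denotes a set of representatives of the double cosets (post-composition by $\operatorname{Aut}_B(B)$, pre-composition by $\operatorname{Aut}_A(C)$). $\overline\varphi$ is the class of $\varphi$ in $\operatorname{Aut}_B(B)\backslash\operatorname{Hom}_{\mathcal F}(C,B)$. Mackey algebra: for $H\le K\le S$, $R^K_H$ is the isomorphism class of the $(H,K)$-biset $(H\times K)/\Delta(H)$, $I^K_H$ that of the $(K,H)$-biset $(K\times H)/\Delta(H)$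 ($\Delta(H)=\{(h,h)\}$), and for an isomorphism $\varphi:H\to\varphi(H)$ in $\mathcal F$, $c_\varphi$ is the class of the $(\varphi(H),H)$-biset $(\varphi(H)\times H)/\{(\varphi(h),h)\}$ (actions $a\cdot(x,y)\cdot b=(ax,b^{-1}y)$). The product of the class of an $(H,J)$-biset $X$ and of a $(J',K)$-biset $Y$ is the class of $X\times_JY$ if $J=J'$ and $0$ otherwise. $\mu_{\mathbb Z}(\mathcal F)$ is the Grothendieck group of the semiring (addition = disjoint union, with a zero element) generated by all $I^K_H,R^K_H,c_\varphi$, and $\mu_R(\mathcal F)=R\otimes_{\mathbb Z}\mu_{\mathbb Z}(\mathcal F)$. For $\varphi\in\operatorname{Hom}_{\mathcal F}(C,B)$, $I^B_{\overline\varphi(C)}c_{\overline\varphi}:=I^B_{\varphi(C)}c_\varphi$ with $\varphi$ viewed as an isomorphism onto its image (this depends only on $\overline\varphi$). *)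

From HB Require Import structures.
From mathcomp Require Import all_boot all_order all_algebra all_fingroup.
Set Implicit Arguments. Unset Strict Implicit. Unset Printing Implicit Defensive.
Import GRing.Theory.
Local Open Scope group_scope.

Section FusionMackey.
Variable gT : finGroupType.
Implicit Types P Q T A B C H K : {set gT}.

(* A map P -> Q is stored as the finite function equal to it on P and to 1 off P. *)
Definition restrict P (f : gT -> gT) : {ffun gT -> gT} :=
  [ffun x => if x \in P then f x else 1].

(* c_s restricted to P : x |-> s x s^-1  (in MathComp, x ^ y = y^-1 x y) *)
Definition conjmap P (s : gT) : {ffun gT -> gT} := restrict P (fun x => x ^ s^-1).

Definition finv P (f : {ffun gT -> gT}) : {ffun gT -> gT} :=
  restrict (f @: P) (fun y => odflt 1 [pick x in P | f x == y]).

Definition injhom P Q (f : {ffun gT -> gT}) : bool :=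
  [&& f @: P \subset Q,
      [forall x in P, forall y in P, f (x * y) == f x * f y],
      [forall x in P, forall y in P, (f x == f y) ==> (x == y)] &
      [forall x, (x \notin P) ==> (f x == 1)]].

(* a fusion system is a set of triples (P, Q, phi) with phi in Hom_F(P,Q) *)
Definition fus_triple := ({set gT} * {set gT} * {ffun gT -> gT})%type.

Definition is_fusion_system (S : {set gT}) (F : {set fus_triple}) : Prop :=
  [/\ (forall P Q f, (P, Q, f) \in F ->
         [/\ group_set P, group_set Q, P \subset S, Q \subset S & injhom P Q f]),
      (forall P Q s, group_set P -> group_set Q -> P \subset S -> Q \subset S ->
         s \in S -> P :^ s^-1 \subset Q -> (P, Q, conjmap P s) \in F),
      (forall P Q T f g, (P, Q, f) \in F -> (Q, T, g) \in F ->
         (P, T, restrict P (fun x => g (f x))) \in F) &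
      (forall P Q f, (P, Q, f) \in F ->
         (P, f @: P, f) \in F /\ (f @: P, P, finv P f) \in F)].

Definition HomF (F : {set fus_triple}) P Q : {set {ffun gT -> gT}} :=
  [set f | (P, Q, f) \in F].
Definition AutF (F : {set fus_triple}) P := HomF F P P.
Definition AutS (S : {set gT}) P : {set {ffun gT -> gT}} :=
  [set conjmap P s | s in 'N_S(P)].

Definition Fconj (F : {set fus_triple}) P Q : bool :=
  [exists f, ((P, Q, f) \in F) && (f @: P == Q)].

Definition fully_normalized (S : {set gT}) (F : {set fus_triple}) P : Prop :=
  forall Q, Fconj F P Q -> #|'N_S(Q)| <= #|'N_S(P)|.
Definition fully_centralized (S : {set gT}) (F : {set fus_triple}) P : Prop :=
  forall Q, Fconj F P Q -> #|'C_S(Q)| <= #|'C_S(P)|.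

Definition Nphi (S : {set gT}) P (f : {ffun gT -> gT}) : {set gT} :=
  [set g in 'N_S(P) | [exists h in 'N_S(f @: P),
     [forall x in P, f (x ^ g^-1) == (f x) ^ h^-1]]].

(* saturation (Broto-Levi-Oliver).  Aut_S(P) is a p-subgroup of the group
   Aut_F(P); "Aut_S(P) is a Sylow p-subgroup of Aut_F(P)" is stated as
   |Aut_S(P)| = |Aut_F(P)|_p. *)
Definition saturated (p : nat) (S : {set gT}) (F : {set fus_triple}) : Prop :=
  (forall P, group_set P -> P \subset S -> fully_normalized S F P ->
     fully_centralized S F P /\ #|AutS S P| = partn #|AutF F P| p)
  /\ (forall P f, (P, S, f) \in F -> fully_centralized S F (f @: P) ->
     exists psi, (Nphi S P f, S, psi) \in F /\ {in P, forall x, psi x = f x}).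

Record biset := Biset {
  bcar : finType;
  bdom : {set bcar};
  blact : gT -> bcar -> bcar;
  bract : bcar -> gT -> bcar }.

(* generator descriptor (L, Rg, C, f) : the (L,Rg)-biset (L x Rg)/{(f c, c) | c in C}
   with actions a.(x,y).b = (a x, b^-1 y) on cosets. *)
Definition gdesc := ({set gT} * {set gT} * {set gT} * {ffun gT -> gT})%type.
Definition gleft (g : gdesc) := g.1.1.1.
Definition gright (g : gdesc) := g.1.1.2.

Definition gen_biset (g : gdesc) : biset :=
  let: (L, Rg, C, f) := g in
  @Biset {set (gT * gT)}
    [set [set (x.1 * f h, x.2 * h) | h in C] | x in setX L Rg]
    (fun a O => [set (a * q.1, q.2) | q in O])
    (fun O b => [set (q.1, b^-1 * q.2) | q in O]).

(* X x_J Y = (X x Y) / J,  (x j, y) ~ (x, j y) *)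
Definition btensor (J : {set gT}) (X Y : biset) : biset :=
  @Biset {set (bcar X * bcar Y)}
    [set [set (bract q.1 j^-1, blact j q.2) | j in J] | q in setX (bdom X) (bdom Y)]
    (fun a O => [set (blact a q.1, q.2) | q in O])
    (fun O b => [set (q.1, bract q.2 b) | q in O]).

(* The class of an (H,K)-biset X is recorded by its coordinates on the
   transitive bisets (H x K)/L : the number of (H x K)-orbits of X whose
   stabilizers (for (a,b).x = a x b^-1) are conjugate in H x K to L. *)
Definition bstab H K (X : biset) (x : bcar X) : {set (gT * gT)} :=
  [set q in setX H K | blact q.1 (bract x q.2^-1) == x].
Definition borbits H K (X : biset) : {set {set bcar X}} :=
  [set [set blact a (bract x b) | a in H, b in K] | x in bdom X].
Definition nb_type H K (X : biset) (L : {set (gT * gT)}) : nat :=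
  #|[set O in borbits H K X | [exists x in O, L \in bstab H K x :^: setX H K]]|.

Definition cidx := ({set gT} * {set gT} * {set (gT * gT)})%type.
Local Notation coordT R := ({ffun cidx -> R^o}) (only parsing).

Definition bclass (R : comPzRingType) H K (X : biset) : coordT R :=
  [ffun t : cidx => if (t.1.1 == H) && (t.1.2 == K) then ((nb_type H K X t.2)%:R)%R else 0%R].

Fixpoint wbiset (g : gdesc) (w : seq gdesc) : biset :=
  match w with
  | [::] => gen_biset g
  | g' :: w' => btensor (gright g) (gen_biset g) (wbiset g' w')
  end.

(* class of the product of a word; 0 if the groups do not match *)
Definition wval (R : comPzRingType) (w : seq gdesc) : coordT R :=
  match w with
  | [::] => 0%R
  | g :: w' =>
      if path (fun g1 g2 => gright g1 == gleft g2) g w'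
      then bclass R (gleft g) (gright (last g w')) (wbiset g w')
      else 0%R
  end.

(* generators I^K_H, R^K_H (H <= K <= S) and c_phi (phi : H -> phi(H) in F) *)
Definition isGen (S : {set gT}) (F : {set fus_triple}) (g : gdesc) : Prop :=
  (exists H K, [/\ group_set H, group_set K, H \subset K, K \subset S &
                   g = (K, H, H, restrict H id)])
  \/ (exists H K, [/\ group_set H, group_set K, H \subset K, K \subset S &
                   g = (H, K, H, restrict H id)])
  \/ (exists H (f : {ffun gT -> gT}), (H, f @: H, f) \in F /\ g = (f @: H, H, H, f)).

(* mu_R(F): R-linear combinations of classes of products of generators *)
Definition in_mu (R : comPzRingType) (S : {set gT}) (F : {set fus_triple})
    (v : coordT R) : Prop :=
  exists s : seq (R * seq gdesc),
    (forall q g, q \in s -> g \in q.2 -> isGen S F g) /\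
    v = (\sum_(q <- s) q.1 *: wval R q.2)%R.

Definition bidx := ({set gT} * {set gT} * {set gT} * {ffun gT -> gT})%type.

Definition basis_word (i : bidx) : seq gdesc :=
  let: (A, B, C, f) := i in
  [:: (B, f @: C, f @: C, restrict (f @: C) id); (f @: C, C, C, f); (C, A, C, restrict C id)].

Definition bvec (R : comPzRingType) (i : bidx) : coordT R := wval R (basis_word i).

Definition dcoset A B C (f : {ffun gT -> gT}) : {set {ffun gT -> gT}} :=
  [set restrict C (fun x => (f (x ^ a^-1)) ^ b^-1) | a in 'N_A(C), b in B].

Definition crep_system (S : {set gT}) (crep : {set gT} -> {set {set gT}}) : Prop :=
  forall A, group_set A -> A \subset S ->
    (forall C, C \in crep A -> group_set C && (C \subset A)) /\
    (forall C, group_set C -> C \subset A -> #|[set D in crep A | D \in C :^: A]| = 1%N).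

Definition phirep_system (S : {set gT}) (F : {set fus_triple})
    (crep : {set gT} -> {set {set gT}})
    (phirep : {set gT} -> {set gT} -> {set gT} -> {set {ffun gT -> gT}}) : Prop :=
  forall A B C, group_set A -> group_set B -> A \subset S -> B \subset S -> C \in crep A ->
    phirep A B C \subset HomF F C B /\
    (forall f, f \in HomF F C B -> #|phirep A B C :&: dcoset A B C f| = 1%N).

Definition basis_index (S : {set gT}) (crep : {set gT} -> {set {set gT}})
    (phirep : {set gT} -> {set gT} -> {set gT} -> {set {ffun gT -> gT}}) : {set bidx} :=
  [set i : bidx | [&& group_set i.1.1.1, group_set i.1.1.2, i.1.1.1 \subset S,
                      i.1.1.2 \subset S, i.1.2 \in crep i.1.1.1 &
                      i.2 \in phirep i.1.1.1 i.1.1.2 i.1.2]].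

End FusionMackey.
Notation coordT gT R := ({ffun cidx gT -> R^o}) (only parsing).

(* The class of an (H,K)-biset is recorded by counting its orbits according to the
   (H x K)-conjugacy class of their point stabilizers.  The generators I, R and c_phi
   have only twisted diagonal stabilizers {(theta d, d) | d in D} with theta in
   Hom_F(D, H), and this survives tensor products: a stabilizer of X x_J Y is the
   relational composite of stabilizers of X and Y, hence a twisted diagonal over a
   preimage, and F is closed under composition, restriction and conjugation.
   The word I^B_{phi(C)} c_phi R^A_C is a transitive biset with stabilizer
   Delta(C, phi), and the chosen representatives make Delta(C, phi) run through the
   (B x A)-classes of twisted diagonals exactly once.  So the basis vectors are the
   indicator vectors of these classes: they are free and span every product of
   generators. *)

From HB Require Import structures.
From mathcomp Require Import all_boot all_order all_algebra all_fingroup all_solvable.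
Import GRing.Theory.
Set Implicit Arguments. Unset Strict Implicit. Unset Printing Implicit Defensive.
Local Open Scope group_scope.

Section Homomorphisms.
Variable gT : finGroupType.

Definition hom_on (C : {set gT}) (f : gT -> gT) := {in C &, {morph f : x y / x * y}}.

Lemma hom_on1 (C : {group gT}) f : hom_on C f -> f 1 = 1.
Proof. by move=> hf; apply: (mulIg (f 1)); rewrite -hf // !mulg1 mul1g. Qed.

Lemma hom_onV (C : {group gT}) f x : hom_on C f -> x \in C -> f x^-1 = (f x)^-1.
Proof.
by move=> hf Cx; apply: (mulgI (f x)); rewrite -hf ?groupV // !mulgV (hom_on1 hf).
Qed.

Lemma preim_group_set (D1 D2 : {group gT}) t :
  hom_on D2 t -> group_set [set d in D2 | t d \in D1].
Proof.
move=> tM; apply/group_setP; split=> [|u v]; first by rewrite inE group1 (hom_on1 tM) group1.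
by rewrite !inE => /andP [D2u D1u] /andP [D2v D1v]; rewrite groupM //= tM // groupM.
Qed.

Lemma restrictE (P : {set gT}) (h : gT -> gT) x : x \in P -> restrict P h x = h x.
Proof. by move=> Px; rewrite ffunE Px. Qed.

Lemma conjmapE (P : {set gT}) s x : x \in P -> conjmap P s x = x ^ s^-1.
Proof. exact: restrictE. Qed.

Lemma restrict_id_hom (P : {group gT}) : hom_on P (restrict P id).
Proof. by move=> x y Px Py; rewrite !restrictE ?groupM. Qed.

End Homomorphisms.

Section TwistedDiagonals.
Variable gT : finGroupType.
Implicit Types (D : {set gT}) (t : gT -> gT).

Definition twdiag D t : {set gT * gT} := [set (t d, d) | d in D].

Definition relcomp (H J K : {set gT}) (M N : {set gT * gT}) : {set gT * gT} :=
  [set q in setX H K | [exists j in J, ((q.1, j) \in M) && ((j, q.2) \in N)]].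

Lemma eq_in_twdiag D t t' : {in D, t =1 t'} -> twdiag D t = twdiag D t'.
Proof. by move=> tt'; apply: eq_in_imset => d Dd; rewrite tt'. Qed.

Lemma twdiag_conjg D t (g : gT * gT) :
  twdiag D t :^ g = twdiag (D :^ g.2) (fun c => t (c ^ g.2^-1) ^ g.1).
Proof. by rewrite /conjugate /twdiag -!imset_comp; apply: eq_imset => d /=; rewrite conjgK. Qed.

Lemma twdiag_inj D D' t t' :
  twdiag D t = twdiag D' t' -> D = D' /\ {in D, t =1 t'}.
Proof.
have dom (E : {set gT}) (u : gT -> gT) : [set q.2 | q in twdiag E u] = E.
  by rewrite -imset_comp -[RHS]imset_id.
move=> tt'; split; first by rewrite -(dom D t) tt' dom.
move=> d Dd; have : (t d, d) \in twdiag D' t' by rewrite -tt' imset_f.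
by case/imsetP => d' _ [-> ->].
Qed.

Lemma twdiag_comp (H J K D1 D2 : {set gT}) t1 t2 :
  (forall d, d \in D2 -> t2 d \in D1 -> [/\ t1 (t2 d) \in H, t2 d \in J & d \in K]) ->
  relcomp H J K (twdiag D1 t1) (twdiag D2 t2)
  = twdiag [set d in D2 | t2 d \in D1] (fun d => t1 (t2 d)).
Proof.
move=> memHJK; apply/setP => -[a b]; rewrite /relcomp inE; apply/andP/imsetP.
- case=> _ /exists_inP [j _ /andP [/imsetP [d1 D1d1 [-> ->]] /imsetP [d2 D2d2 [t2d2 ->]]]].
  by exists d2; [rewrite inE D2d2 -t2d2 | rewrite t2d2].
- case=> d; rewrite inE => /andP [D2d D1t2d] [-> ->].
  have [Ht1 Jt2 Kd] := memHJK d D2d D1t2d.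
  split; first by rewrite inE /= Ht1 Kd.
  by apply/exists_inP; exists (t2 d); rewrite //= !imset_f.
Qed.

Lemma twdiag_comp_sub (H J K D1 D2 : {set gT}) t1 t2 :
  {in D2, forall d, t2 d \in D1} ->
  (forall d, d \in D2 -> [/\ t1 (t2 d) \in H, t2 d \in J & d \in K]) ->
  relcomp H J K (twdiag D1 t1) (twdiag D2 t2) = twdiag D2 (fun d => t1 (t2 d)).
Proof.
move=> t2D memHJK; rewrite twdiag_comp => [|d D2d _]; last exact: memHJK.
by congr twdiag; apply/setP => d; rewrite inE andb_idr //; apply: t2D.
Qed.

End TwistedDiagonals.

Section BisetAxioms.
Variable gT : finGroupType.

Record biset_axioms (X : biset gT) : Prop := BisetAxioms {
  blact1 : forall x : bcar X, blact 1 x = x;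
  blactM : forall a b (x : bcar X), blact (a * b) x = blact a (blact b x);
  bract1 : forall x : bcar X, bract x 1 = x;
  bractM : forall a b (x : bcar X), bract x (a * b) = bract (bract x a) b;
  bactC : forall a b (x : bcar X), blact a (bract x b) = bract (blact a x) b }.

Lemma gen_biset_axioms g : biset_axioms (gen_biset g).
Proof.
case: g => [[[L Rg] C] f]; split=> /= [O|a b O|O|a b O|a b O].
- by rewrite -[RHS]imset_id; apply: eq_imset => -[? ?] /=; rewrite mul1g.
- by rewrite -imset_comp; apply: eq_imset => -[? ?] /=; rewrite mulgA.
- by rewrite -[RHS]imset_id; apply: eq_imset => -[? ?] /=; rewrite invg1 mul1g.
- by rewrite -imset_comp; apply: eq_imset => -[? ?] /=; rewrite invMg mulgA.
- by rewrite -!imset_comp; apply: eq_imset => -[? ?].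
Qed.

Lemma btensor_axioms J X Y :
  biset_axioms X -> biset_axioms Y -> biset_axioms (btensor J X Y).
Proof.
move=> [l1 lM r1 rM lr] [l1' lM' r1' rM' lr']; split=> /= [O|a b O|O|a b O|a b O].
- by rewrite -[RHS]imset_id; apply: eq_imset => -[? ?] /=; rewrite l1.
- by rewrite -imset_comp; apply: eq_imset => -[? ?] /=; rewrite lM.
- by rewrite -[RHS]imset_id; apply: eq_imset => -[? ?] /=; rewrite r1'.
- by rewrite -imset_comp; apply: eq_imset => -[? ?] /=; rewrite rM'.
- by rewrite -!imset_comp; apply: eq_imset => -[? ?].
Qed.

Definition borbit (H K : {set gT}) (X : biset gT) (x : bcar X) : {set bcar X} :=
  [set blact a (bract x b) | a in H, b in K].

Definition btransitive (H K : {set gT}) (X : biset gT) (x0 : bcar X) :=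
  forall x, x \in bdom X ->
    exists2 a, a \in H & exists2 b, b \in K & x = blact a (bract x0 b).

Definition transitive_bclass (R : comPzRingType) (H K : {set gT}) (L : {set gT * gT})
    : coordT gT R :=
  [ffun t : cidx gT => if (t.1.1 == H) && (t.1.2 == K)
     then ((t.2 \in L :^: setX H K) : nat)%:R else 0]%R.

Lemma mem_bstab_setX (H K : {set gT}) (X : biset gT) (x : bcar X) q :
  q \in bstab H K x -> q \in setX H K.
Proof. by rewrite inE => /andP []. Qed.

End BisetAxioms.

Section BisetOrbits.
Variables (gT : finGroupType) (H K : {group gT}) (X : biset gT).
Hypothesis bX : biset_axioms X.
Implicit Types (x y : bcar X) (L : {set gT * gT}).

Lemma bact_inj a b : injective (fun x : bcar X => blact a (bract x b)).
Proof.
move=> x y /(congr1 (fun z => blact a^-1 (bract z b^-1))).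
by rewrite -!(bactC bX) -!(blactM bX) -!(bractM bX) mulVg mulgV (blact1 bX) (bract1 bX)
  (blact1 bX) (bract1 bX).
Qed.

Lemma bstab_act a b x : a \in H -> b \in K ->
  bstab H K (blact a (bract x b)) = bstab H K x :^ ((a^-1, b) : gT * gT).
Proof.
move=> Ha Kb; apply/setP => -[u v]; rewrite mem_conjg /bstab !inE /= !invgK.
rewrite groupMl ?groupV // groupMr // groupMl // groupMr ?groupV //; congr (_ && _).
rewrite -[RHS](inj_eq (@bact_inj a b)) -!(bactC bX) -!(blactM bX) -!(bractM bX).
by rewrite mulKVg !invMg invgK mulgKV.
Qed.

Lemma borbit_act a b x : a \in H -> b \in K ->
  borbit H K (blact a (bract x b)) = borbit H K x.
Proof.
move=> Ha Kb; apply/setP => y; apply/imset2P/imset2P => -[a' b' Ha' Kb' ->].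
- exists (a' * a) (b * b'); rewrite ?groupM //.
  by rewrite -(bactC bX) -(blactM bX) -(bractM bX).
- exists (a' * a^-1) (b^-1 * b'); rewrite ?groupM ?groupV //.
  by rewrite -(bactC bX) -(blactM bX) -(bractM bX) mulgKV mulKVg.
Qed.

Lemma bstab_borbit x y :
  y \in borbit H K x -> bstab H K y \in bstab H K x :^: setX H K.
Proof.
case/imset2P => a b Ha Kb ->; rewrite bstab_act //.
by apply/imsetP; exists (a^-1, b); rewrite // inE /= groupV Ha Kb.
Qed.

Lemma nb_type_conj L L' : L' \in L :^: setX H K -> nb_type H K X L' = nb_type H K X L.
Proof.
move=> LL'; apply: eq_card => O; rewrite !inE; congr (_ && _).
by apply: eq_existsb_in => x _; rewrite -!orbitJs (orbit_transl _ LL').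
Qed.

Lemma nb_type_transitive x0 L : x0 \in bdom X -> btransitive H K x0 ->
  nb_type H K X L = (L \in bstab H K x0 :^: setX H K).
Proof.
move=> Dx0 trX; set Q := fun O : {set bcar X} =>
  [exists x in O, L \in bstab H K x :^: setX H K].
have orbitsE : borbits H K X = [set borbit H K x0].
  apply/setP => O; rewrite inE; apply/imsetP/eqP => [[x /trX [a Ha [b Kb ->]] ->]|->].
    exact: borbit_act.
  by exists x0.
have QE : Q (borbit H K x0) = (L \in bstab H K x0 :^: setX H K).
  apply/exists_inP/idP => [[x /bstab_borbit x0x]|Lx0]; last first.
    by exists x0 => //; apply/imset2P; exists 1 1; rewrite ?(bract1 bX) ?(blact1 bX).
  by move=> Lx; rewrite -!orbitJs in Lx x0x *; exact: orbit_trans Lx x0x.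
rewrite /nb_type orbitsE -QE.
have -> : [set O in [set borbit H K x0] | Q O]
          = if Q (borbit H K x0) then [set borbit H K x0] else set0.
  apply/setP => O; rewrite !inE.
  case: eqP => [->|neO]; case: ifP => QO; rewrite ?inE ?eqxx ?QO //.
  exact/esym/eqP.
by case: ifP => _; rewrite ?cards1 ?cards0.
Qed.

Lemma bclass_transitive R x0 : x0 \in bdom X -> btransitive H K x0 ->
  bclass R H K X = transitive_bclass R H K (bstab H K x0).
Proof.
move=> Dx0 trX; apply/ffunP => t; rewrite !ffunE.
by case: ifP => // _; rewrite (nb_type_transitive _ Dx0 trX).
Qed.

Lemma nb_type_neq0 L : nb_type H K X L != 0 ->
  exists2 x, x \in bdom X & L \in bstab H K x :^: setX H K.
Proof.
rewrite -lt0n card_gt0 => /set0Pn [O]; rewrite inE => /andP [/imsetP [x Dx ->]].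
case/exists_inP => y /bstab_borbit xy Ly; exists x => //.
by rewrite -!orbitJs in xy Ly *; exact: orbit_trans Ly xy.
Qed.

End BisetOrbits.

Section Tensor.
Variables (gT : finGroupType) (J : {group gT}) (X Y : biset gT).
Hypotheses (bX : biset_axioms X) (bY : biset_axioms Y).
Implicit Types (x : bcar X) (y : bcar Y).

Definition tclass x y : {set bcar X * bcar Y} := [set (bract x j^-1, blact j y) | j in J].

Lemma tclass_shift k x y : k \in J -> tclass (bract x k^-1) (blact k y) = tclass x y.
Proof.
move=> Jk; apply/setP => u; apply/imsetP/imsetP => -[j Jj ->].
- exists (j * k); first by rewrite groupM.
  by rewrite -(bractM bX) -(blactM bY) invMg.
- exists (j * k^-1); first by rewrite groupM ?groupV.
  by rewrite -(bractM bX) -(blactM bY) invMg invgK mulKg mulgKV.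
Qed.

Lemma tclass_shiftV k x y : k \in J -> tclass (bract x k) y = tclass x (blact k y).
Proof.
move=> Jk; rewrite -(tclass_shift x (blact k y) (groupVr Jk)) invgK.
by rewrite -(blactM bY) mulVg (blact1 bY).
Qed.

Lemma tclass_eq x y x' y' : (tclass x' y' == tclass x y) = ((x', y') \in tclass x y).
Proof.
apply/eqP/idP => [<-|/imsetP [j Jj [-> ->]]]; last exact: tclass_shift.
by apply/imsetP; exists 1; rewrite ?invg1 ?(bract1 bX) ?(blact1 bY).
Qed.

Lemma blact_tclass a x y : @blact _ (btensor J X Y) a (tclass x y) = tclass (blact a x) y.
Proof. by rewrite /= /tclass -imset_comp; apply: eq_imset => j /=; rewrite (bactC bX). Qed.

Lemma bract_tclass b x y : @bract _ (btensor J X Y) (tclass x y) b = tclass x (bract y b).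
Proof. by rewrite /= /tclass -imset_comp; apply: eq_imset => j /=; rewrite (bactC bY). Qed.

Lemma btensor_domP z : z \in bdom (btensor J X Y) ->
  exists2 x, x \in bdom X & exists2 y, y \in bdom Y & z = tclass x y.
Proof.
by case/imsetP => -[x y]; rewrite inE => /andP [Dx Dy] ->; exists x => //; exists y.
Qed.

Lemma tclass_dom x y : x \in bdom X -> y \in bdom Y -> tclass x y \in bdom (btensor J X Y).
Proof. by move=> Dx Dy; apply/imsetP; exists (x, y); rewrite ?inE ?Dx. Qed.

Lemma bstab_tensor (H K : {set gT}) x y :
  bstab H K (X := btensor J X Y) (tclass x y) = relcomp H J K (bstab H J x) (bstab J K y).
Proof.
apply/setP => -[a b]; rewrite /bstab /relcomp inE [in RHS]inE.
rewrite bract_tclass blact_tclass tclass_eq.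
case: (boolP (_ \in setX H K)) => //=; rewrite inE /= => /andP [Ha Kb].
apply/imsetP/existsP => [[j Jj [e1 e2]]|[j /and3P [Jj]]].
- exists j^-1; rewrite !inE /= groupV Jj Ha Kb invgK /=.
  rewrite (bactC bX) e1 -(bractM bX) mulVg (bract1 bX) eqxx.
  by rewrite e2 -(blactM bY) mulVg (blact1 bY) eqxx.
- rewrite !inE /= => /andP [_ /eqP s1] /andP [_ /eqP s2].
  exists j^-1; first by rewrite groupV.
  congr (_, _); first by rewrite -{2}s1 invgK -(bactC bX) -(bractM bX) mulVg (bract1 bX).
  by rewrite -{2}s2 -(blactM bY) mulVg (blact1 bY).
Qed.

Lemma btensor_transitive (H K : {group gT}) x0 y0 :
  btransitive H J x0 -> btransitive J K y0 ->
  (forall j, j \in J -> exists2 a, a \in H & bract x0 j = blact a x0) ->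
  btransitive H K (X := btensor J X Y) (tclass x0 y0).
Proof.
move=> trX trY Jx0 z /btensor_domP [x /trX [a Ha [j Jj ->]]] [y /trY [j' Jj' [b Kb ->]]] ->.
have [a' Ha' x0jj'] := Jx0 _ (groupM Jj Jj').
exists (a * a'); first exact: groupM.
exists b => //; have bT := btensor_axioms J bX bY.
rewrite -blact_tclass tclass_shiftV // -(blactM bY) (bactC bY) -bract_tclass.
by rewrite -tclass_shiftV ?groupM // x0jj' -blact_tclass (blactM bT) -(bactC bT).
Qed.

End Tensor.

Section GenBiset.
Variable gT : finGroupType.

Definition gcoset (C : {set gT}) (f : gT -> gT) (u : gT * gT) : {set gT * gT} :=
  [set (u.1 * f h, u.2 * h) | h in C].

Variables (L Rg C : {group gT}) (f : {ffun gT -> gT}).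
Hypothesis hf : hom_on C f.
Local Notation G := (gen_biset (gval L, gval Rg, gval C, f)).
Local Notation g0 := (gcoset C f (1, 1)).

Lemma gcoset_eq u v : (gcoset C f u == gcoset C f v) = (u \in gcoset C f v).
Proof.
apply/eqP/idP => [<-|/imsetP [c Cc ->]].
  by apply/imsetP; exists 1; rewrite // (hom_on1 hf) !mulg1; case: u.
apply/setP => w; apply/imsetP/imsetP => -[h Ch ->] /=.
  by exists (c * h); rewrite ?groupM // hf // !mulgA.
exists (c^-1 * h); rewrite ?groupM ?groupV // hf ?groupV // (hom_onV hf) //.
by rewrite !mulgA !mulgK.
Qed.

Lemma gen_blact a u : @blact _ G a (gcoset C f u) = gcoset C f (a * u.1, u.2).
Proof. by rewrite /= /gcoset -imset_comp; apply: eq_imset => h /=; rewrite mulgA. Qed.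

Lemma gen_bract b u : @bract _ G (gcoset C f u) b = gcoset C f (u.1, b^-1 * u.2).
Proof. by rewrite /= /gcoset -imset_comp; apply: eq_imset => h /=; rewrite mulgA. Qed.

Lemma gen_base_dom : g0 \in bdom G.
Proof. by apply/imsetP; exists (1, 1); rewrite ?inE ?group1. Qed.

Lemma gen_transitive : btransitive L Rg (X := G) g0.
Proof.
move=> x /imsetP [[u1 u2]]; rewrite inE => /andP [Lu1 Ru2] ->.
exists u1 => //; exists u2^-1; first by rewrite groupV.
by rewrite gen_bract gen_blact /= invgK !mulg1.
Qed.

Lemma gen_shift j : j \in C -> @bract _ G g0 j = @blact _ G (f j) g0.
Proof.
move=> Cj; rewrite gen_bract gen_blact /= !mulg1; apply/eqP; rewrite gcoset_eq.
by apply/imsetP; exists j^-1; rewrite ?groupV //= (hom_onV hf) // mul1g mulgV.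
Qed.

Lemma gen_bstab : {in C, forall c, f c \in L} -> C \subset Rg ->
  bstab L Rg (X := G) g0 = twdiag C f.
Proof.
move=> fCL sCR; apply/setP => -[a b].
rewrite inE gen_bract gen_blact gcoset_eq /= !mulg1 invgK /twdiag.
apply/andP/imsetP => [[_ /imsetP [c Cc [-> ->]]]|[c Cc [-> ->]]].
  by exists c; rewrite ?mul1g.
split; first by rewrite inE /= fCL // (subsetP sCR).
by apply/imsetP; exists c; rewrite ?mul1g.
Qed.

End GenBiset.

Section FusionFacts.
Variables (gT : finGroupType) (S : {group gT}) (F : {set fus_triple gT}).
Hypothesis fusF : is_fusion_system S F.
Implicit Types (P Q T : {set gT}) (f g : {ffun gT -> gT}).

Lemma fusion_morP P Q f : (P, Q, f) \in F ->
  [/\ group_set P, group_set Q, P \subset S, Q \subset S & injhom P Q f].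
Proof. by case: fusF => morF _ _ _; apply: morF. Qed.

Lemma fusion_hom P Q f : (P, Q, f) \in F -> hom_on P f.
Proof.
case/fusion_morP => _ _ _ _ /and4P [_ /forall_inP fM _ _] x y Px Py.
by apply/eqP; move/forall_inP: (fM x Px); apply.
Qed.

Lemma fusion_in P Q f x : (P, Q, f) \in F -> x \in P -> f x \in Q.
Proof. by case/fusion_morP => _ _ _ _ /and4P [/subsetP fPQ _ _ _] Px; apply/fPQ/imset_f. Qed.

Lemma fusion_out P Q f x : (P, Q, f) \in F -> x \notin P -> f x = 1.
Proof. by case/fusion_morP => _ _ _ _ /and4P [_ _ _ /forallP /(_ x) /implyP f1]; move/f1/eqP. Qed.

Lemma fusion_image P Q f : (P, Q, f) \in F -> (P, f @: P, f) \in F.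
Proof. by case: fusF => _ _ _ invF /invF []. Qed.

Lemma fusion_conj (P Q : {group gT}) s : P \subset S -> Q \subset S -> s \in S ->
  P :^ s^-1 \subset Q -> (gval P, gval Q, conjmap P s) \in F.
Proof. by case: fusF => _ conjF _ _; apply: conjF; apply: groupP. Qed.

Lemma fusion_comp P Q T f g : (P, Q, f) \in F -> (Q, T, g) \in F ->
  exists2 h, (P, T, h) \in F & {in P, forall x, h x = g (f x)}.
Proof.
case: fusF => _ _ compF _ Ff Fg; exists (restrict P (fun x => g (f x))).
  exact: compF Ff Fg.
by move=> x; apply: restrictE.
Qed.

Lemma fusion_id (P Q : {group gT}) : P \subset Q -> Q \subset S ->
  (gval P, gval Q, restrict P id) \in F.
Proof.
move=> sPQ sQS; have -> : restrict P id = conjmap P 1.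
  by apply/ffunP => x; rewrite !ffunE invg1 conjg1.
by apply: fusion_conj; rewrite ?invg1 ?conjsg1 // (subset_trans sPQ).
Qed.

Lemma fusion_res P Q f (P' Q' : {group gT}) : (P, Q, f) \in F -> P' \subset P ->
  Q' \subset S -> {in P', forall x, f x \in Q'} ->
  exists2 h, (gval P', gval Q', h) \in F & {in P', forall x, h x = f x}.
Proof.
move=> Ff sP'P sQ'S fP'Q'; have [gP _ sPS _ _] := fusion_morP Ff.
have [h1 F1 h1E] := fusion_comp (fusion_id (Q := Group gP) sP'P sPS) Ff.
have Fim := fusion_image F1; have [_ gI _ _ _] := fusion_morP Fim.
have sIQ' : Group gI \subset Q'.
  by apply/subsetP => _ /imsetP [x P'x ->]; rewrite h1E // restrictE // fP'Q'.
have [h F2 hE] := fusion_comp Fim (fusion_id sIQ' sQ'S).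
exists h => // x P'x; rewrite hE // restrictE; last exact: imset_f.
by rewrite h1E // restrictE.
Qed.

End FusionFacts.

Section TwistedStabilizers.
Variables (gT : finGroupType) (S : {group gT}) (F : {set fus_triple gT}).
Hypothesis fusF : is_fusion_system S F.

Definition twisted_stabilizers (H K : {set gT}) (X : biset gT) :=
  forall x, x \in bdom X ->
    exists D t, (D, H, t) \in F /\ bstab H K x = twdiag D t.

Lemma twdiag_conj_fusion (H : {group gT}) D t (g : gT * gT) :
  (D, gval H, t) \in F -> g.1 \in H -> g.2 \in S ->
  exists t', (D :^ g.2, gval H, t') \in F /\ twdiag D t :^ g = twdiag (D :^ g.2) t'.
Proof.
case: g => g1 g2 /= Ft Hg1 Sg2; have [gD _ sDS sHS _] := fusion_morP fusF Ft.
have FcD : (D :^ g2, D, conjmap (D :^ g2) g2) \in F.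
  apply: (fusion_conj fusF (P := (Group gD :^ g2)%G) (Q := Group gD)) => //=.
    by rewrite -(conjGid Sg2) conjSg.
  by rewrite conjsgK.
have FcH : (gval H, gval H, conjmap H g1^-1) \in F.
  by apply: (fusion_conj fusF) => //; rewrite ?groupV ?(subsetP sHS) // invgK conjGid.
have [t1 Ft1 t1E] := fusion_comp fusF FcD Ft.
have [t' Ft' t'E] := fusion_comp fusF Ft1 FcH.
exists t'; split => //; rewrite twdiag_conjg; apply: eq_in_twdiag => c Dc /=.
rewrite t'E // t1E // !conjmapE ?invgK //.
by rewrite (fusion_in fusF Ft) // -mem_conjg.
Qed.

Lemma gen_twisted_stabilizers (L Rg C : {group gT}) f :
  L \subset S -> Rg \subset S -> C \subset Rg -> (gval C, gval L, f) \in F ->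
  twisted_stabilizers L Rg (gen_biset (gval L, gval Rg, gval C, f)).
Proof.
move=> sLS sRS sCR Ff; have hf := fusion_hom fusF Ff.
move=> x /gen_transitive [a La [b Rb ->]].
rewrite (bstab_act (gen_biset_axioms _)) // gen_bstab //; last first.
  by move=> c; apply: (fusion_in fusF Ff).
have [t' [Ft' ->]] := twdiag_conj_fusion (g := (a^-1, b)) Ff (groupVr La) (subsetP sRS b Rb).
by exists (C :^ b), t'.
Qed.

Lemma btensor_twisted_stabilizers (J : {group gT}) (X Y : biset gT) (H K : {set gT}) :
  biset_axioms X -> biset_axioms Y ->
  twisted_stabilizers H J X -> twisted_stabilizers J K Y ->
  twisted_stabilizers H K (btensor J X Y).
Proof.
move=> bX bY stX stY _ /btensor_domP [x Dx [y Dy ->]].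
have [D1 [t1 [Ft1 stx]]] := stX x Dx; have [D2 [t2 [Ft2 sty]]] := stY y Dy.
have [gD1 _ sD1S _ _] := fusion_morP fusF Ft1.
have [gD2 _ _ _ _] := fusion_morP fusF Ft2; have t2M := fusion_hom fusF Ft2.
pose D := [set d in D2 | t2 d \in D1].
have gD : group_set D := preim_group_set (Group gD1) (D2 := Group gD2) t2M.
have sDD2 : Group gD \subset D2 by apply/subsetP => d; rewrite inE => /andP [].
have t2D : {in Group gD, forall d, t2 d \in Group gD1} by move=> d; rewrite inE => /andP [].
have [h Fh hE] := fusion_res fusF (Q' := Group gD1) Ft2 sDD2 sD1S t2D.
have [h' Fh' h'E] := fusion_comp fusF Fh Ft1.
exists D, h'; split => //; rewrite bstab_tensor // stx sty twdiag_comp.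
  by apply: eq_in_twdiag => d Dd; rewrite h'E // hE.
move=> d D2d D1t2d.
have /mem_bstab_setX : (t2 d, d) \in bstab J K y by rewrite sty imset_f.
have /mem_bstab_setX : (t1 (t2 d), t2 d) \in bstab H J x by rewrite stx imset_f.
by rewrite !inE => /andP [? _] /andP [? ?].
Qed.

End TwistedStabilizers.

Section Words.
Variables (gT : finGroupType) (S : {group gT}) (F : {set fus_triple gT}).
Hypothesis fusF : is_fusion_system S F.

Lemma isGen_fusion g : isGen S F g -> exists (L Rg C : {group gT}) f,
  [/\ g = (gval L, gval Rg, gval C, f), L \subset S, Rg \subset S, C \subset Rg
    & (gval C, gval L, f) \in F].
Proof.
case=> [[H [K [gH gK sHK sKS ->]]]|[[H [K [gH gK sHK sKS ->]]]|[H [f [Ff ->]]]]].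
- exists (Group gK), (Group gH), (Group gH), (restrict H id); split=> //.
    exact: subset_trans sHK sKS.
  exact: (fusion_id fusF (P := Group gH) (Q := Group gK)).
- have sHS := subset_trans sHK sKS.
  exists (Group gH), (Group gK), (Group gH), (restrict H id); split=> //.
  exact: (fusion_id fusF (P := Group gH) (Q := Group gH)).
- have [gH gfH sHS sfHS _] := fusion_morP fusF Ff.
  by exists (Group gfH), (Group gH), (Group gH), f; split.
Qed.

Lemma wbiset_twisted_stabilizers g w : {in g :: w, forall g', isGen S F g'} ->
  path (fun g1 g2 => gright g1 == gleft g2) g w ->
  exists (H K : {group gT}), [/\ gleft g = gval H, gright (last g w) = gval K,
    H \subset S /\ K \subset S, biset_axioms (wbiset g w)
    & twisted_stabilizers F H K (wbiset g w)].
Proof.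
elim: w g => [|g' w IHw] g genw /= => [_|].
  have [L [Rg [C [f [-> sLS sRS sCR Ff]]]]] := isGen_fusion (genw g (mem_head _ _)).
  exists L, Rg; split=> //; first exact: gen_biset_axioms.
  exact: (gen_twisted_stabilizers fusF sLS sRS sCR Ff).
case/andP=> /eqP gg' pw; have genw' : {in g' :: w, forall g'', isGen S F g''}.
  by move=> g'' wg''; apply: genw; rewrite inE wg'' orbT.
have [H' [K [H'E -> [_ sKS] bW stW]]] := IHw g' genw' pw.
have [L [Rg [C [f [gE sLS sRS sCR Ff]]]]] := isGen_fusion (genw g (mem_head _ _)).
have RgE : gval H' = gval Rg by rewrite -H'E -gg' gE.
rewrite {}RgE in stW; rewrite {}gE; exists L, K; split=> //.
  exact: btensor_axioms (gen_biset_axioms _) bW.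
exact: (btensor_twisted_stabilizers fusF (J := Rg) (gen_biset_axioms _) bW
  (gen_twisted_stabilizers fusF sLS sRS sCR Ff) stW).
Qed.

End Words.

Section BasisIndex.
Variables (gT : finGroupType) (S : {group gT}) (F : {set fus_triple gT}).
Variables (crep : {set gT} -> {set {set gT}})
  (phirep : {set gT} -> {set gT} -> {set gT} -> {set {ffun gT -> gT}}).
Hypotheses (fusF : is_fusion_system S F) (crepS : crep_system S crep)
  (phirepS : phirep_system S F crep phirep).
Local Notation I := (basis_index S crep phirep).

Lemma basis_indexP A B C f : (A, B, C, f) \in I ->
  [/\ group_set A, group_set B, A \subset S, B \subset S & C \in crep A /\ f \in phirep A B C].
Proof. by rewrite inE /= => /and5P [? ? ? ? /andP [? ?]]. Qed.

Lemma basis_index_fusion A B C f : (A, B, C, f) \in I ->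
  [/\ group_set C, C \subset A & (C, B, f) \in F].
Proof.
case/basis_indexP => gA gB sAS sBS [repC repf].
have [/(_ C repC) /andP [gC sCA] _] := crepS gA sAS.
have [/subsetP /(_ f repf) HomFf _] := phirepS gA gB sAS sBS repC.
by rewrite inE in HomFf.
Qed.

Lemma crep_uniq (A : {group gT}) C C' : A \subset S ->
  C \in crep A -> C' \in crep A -> C' \in C :^: A -> C' = C.
Proof.
move=> sAS repC repC' CC'; have [repA cardA] := crepS (groupP A) sAS.
have /andP [gC sCA] := repA C repC.
have /eqP /cards1P [D DE] := cardA C gC sCA.
have : C \in [set D] by rewrite -DE inE repC -orbitJs orbit_refl.
have : C' \in [set D] by rewrite -DE inE repC'.
by rewrite !inE => /eqP -> /eqP ->.
Qed.

Lemma dcoset_refl (A B : {group gT}) C f : (C, gval B, f) \in F -> f \in dcoset A B C f.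
Proof.
move=> Ff; apply/imset2P; exists 1 1; rewrite ?group1 //.
apply/ffunP => x; rewrite ffunE; case: ifP => [_|/negbT Cx]; first by rewrite invg1 !conjg1.
by rewrite (fusion_out fusF Ff).
Qed.

Lemma phirep_uniq (A B : {group gT}) C f f' : A \subset S -> B \subset S -> C \in crep A ->
  f \in phirep A B C -> f' \in phirep A B C -> f \in dcoset A B C f' -> f = f'.
Proof.
move=> sAS sBS repC repf repf' ff'.
have [sub cardAB] := phirepS (groupP A) (groupP B) sAS sBS repC.
have HomFf' := subsetP sub f' repf'.
have /eqP /cards1P [g gE] := cardAB f' HomFf'.
have Ff' : (C, gval B, f') \in F by rewrite inE in HomFf'.
have : f' \in [set g] by rewrite -gE inE repf' dcoset_refl.
have : f \in [set g] by rewrite -gE inE repf ff'.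
by rewrite !inE => /eqP -> /eqP ->.
Qed.

Lemma twdiag_dcoset (A B : {group gT}) C f f0 : f \in dcoset A B C f0 ->
  exists2 g, g \in setX B A & twdiag C f = twdiag C f0 :^ g.
Proof.
case/imset2P => a b /setIP [Aa Na] Bb ->; exists (b^-1, a).
  by rewrite inE /= Aa groupV Bb.
rewrite twdiag_conjg /= (normP Na); apply: eq_in_twdiag => c Cc.
by rewrite restrictE.
Qed.

Lemma basis_twdiag_uniq A B C C' f f' : (A, B, C, f) \in I -> (A, B, C', f') \in I ->
  twdiag C f \in twdiag C' f' :^: setX B A -> C = C' /\ f = f'.
Proof.
move=> iI i'I /imsetP [[g1 g2]]; rewrite inE /= => /andP [Bg1 Ag2].
rewrite twdiag_conjg => /twdiag_inj [/= CE fE].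
have [gA gB sAS sBS [repC repf]] := basis_indexP iI.
have [_ _ _ _ [repC' repf']] := basis_indexP i'I.
have C'C : C = C'.
  by apply: (crep_uniq (A := Group gA)) => //; apply/imsetP; exists g2.
subst C'; split=> //; have [_ _ Ff] := basis_index_fusion iI.
apply: (phirep_uniq (A := Group gA) (B := Group gB)) repC repf repf' _ => //.
have Ng2 : g2 \in 'N(C) by apply/normP; rewrite -CE.
apply/imset2P; exists g2 g1^-1; [by rewrite inE Ag2 | by rewrite groupV |].
apply/ffunP => x; rewrite ffunE; case: ifP => [Cx|/negbT Cx].
  by rewrite invgK fE.
exact: (fusion_out fusF Ff).
Qed.

Lemma basis_twdiag_exists (H K : {group gT}) D t : H \subset S -> K \subset S ->
  (D, gval H, t) \in F -> D \subset K ->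
  exists C f, (gval K, gval H, C, f) \in I /\ twdiag C f \in twdiag D t :^: setX H K.
Proof.
move=> sHS sKS Ft sDK; have [gD _ _ _ _] := fusion_morP fusF Ft.
have [_ cardK] := crepS (groupP K) sKS.
have /eqP /cards1P [C CE] := cardK D gD sDK.
have : C \in [set C] by rewrite set11.
rewrite -CE inE => /andP [repC /imsetP [k Kk CE']].
have [t' [Ft' tt']] := twdiag_conj_fusion fusF (g := (1, k)) Ft (group1 H) (subsetP sKS k Kk).
rewrite /= -CE' in Ft' tt'.
have [_ cardKH] := phirepS (groupP K) (groupP H) sKS sHS repC.
have /cards1P [f fE] : #|phirep K H C :&: dcoset K H C t'| == 1%N.
  by rewrite cardKH // inE.
have : f \in [set f] by rewrite set11.
rewrite -fE inE => /andP [repf /twdiag_dcoset [g g_HK fg]].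
exists C, f; split; first by rewrite inE /= !groupP sKS sHS repC repf.
apply/imsetP; exists ((1, k) * g); first by rewrite groupM // inE /= group1 Kk.
by rewrite fg conjsgM tt'.
Qed.

End BasisIndex.

Section BasisWord.
Variables (gT : finGroupType) (A B C : {group gT}) (f : {ffun gT -> gT}).
Hypotheses (fM : hom_on C f) (sCA : C \subset A).
Hypotheses (gfC : group_set (f @: C)) (sfCB : f @: C \subset B).
Let E := Group gfC.

Local Notation X := (wbiset (gval B, gval E, gval E, restrict E id)
  [:: (gval E, gval C, gval C, f); (gval C, gval A, gval C, restrict C id)]).

Local Notation X2 := (gen_biset (gval E, gval C, gval C, f)).
Local Notation X3 := (gen_biset (gval C, gval A, gval C, restrict C id)).
Local Notation y0 := (tclass C (X := X2) (Y := X3)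
  (gcoset C f (1, 1)) (gcoset C (restrict C id) (1, 1))).
Local Notation x0 := (tclass E (X := gen_biset (gval B, gval E, gval E, restrict E id))
  (Y := btensor C X2 X3) (gcoset E (restrict E id) (1, 1)) y0).

Lemma basis_point_dom : x0 \in bdom X.
Proof. by rewrite !tclass_dom ?gen_base_dom. Qed.

Lemma basis_word_transitive : btransitive B A (X := X) x0.
Proof.
have bY := btensor_axioms C (gen_biset_axioms (gval E, gval C, gval C, f))
  (gen_biset_axioms (gval C, gval A, gval C, restrict C id)).
apply: (btensor_transitive (gen_biset_axioms _) bY); first exact: gen_transitive.
  apply: (btensor_transitive (gen_biset_axioms _) (gen_biset_axioms _)); try exact: gen_transitive.
  by move=> j Cj; exists (f j); [exact: imset_f | exact: gen_shift].
move=> j Ej; exists j; first exact: (subsetP sfCB).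
by rewrite (gen_shift _ _ (restrict_id_hom (P := E)) Ej) restrictE.
Qed.

Lemma basis_word_bstab : bstab B A (X := X) x0 = twdiag C f.
Proof.
have fCE c : c \in C -> f c \in E by apply: imset_f.
have sEB := subsetP sfCB; have sCA' := subsetP sCA.
have st1 : bstab B E (X := gen_biset (gval B, gval E, gval E, restrict E id))
    (gcoset E (restrict E id) (1, 1)) = twdiag E (restrict E id).
  by apply: gen_bstab (restrict_id_hom (P := E)) _ (subxx _) => c Ec; rewrite restrictE ?sEB.
have st2 : bstab E C (X := X2) (gcoset C f (1, 1)) = twdiag C f.
  exact: gen_bstab fM fCE (subxx _).
have st3 : bstab C A (X := X3) (gcoset C (restrict C id) (1, 1)) = twdiag C (restrict C id).
  by apply: gen_bstab (restrict_id_hom (P := C)) _ sCA => c Cc; rewrite restrictE.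
have bX2 := gen_biset_axioms (gval E, gval C, gval C, f).
have bX3 := gen_biset_axioms (gval C, gval A, gval C, restrict C id).
have stY : bstab E A (X := btensor C X2 X3) y0 = twdiag C f.
  rewrite bstab_tensor // st2 st3 twdiag_comp_sub => [|d Cd|d Cd];
    rewrite ?restrictE ?fCE ?sCA' //.
  by apply: eq_in_twdiag => d Cd; rewrite restrictE.
have bX1 := gen_biset_axioms (gval B, gval E, gval E, restrict E id).
have bY := btensor_axioms C bX2 bX3.
rewrite bstab_tensor // st1 stY.
rewrite twdiag_comp_sub => [|d Cd|d Cd]; rewrite ?restrictE ?fCE ?sEB ?sCA' ?imset_f //.
by apply: eq_in_twdiag => d Cd; rewrite restrictE ?fCE.
Qed.

Lemma bclass_basis_word (R : comPzRingType) :
  bclass R B A X = transitive_bclass R B A (twdiag C f).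
Proof.
have bX := btensor_axioms E (gen_biset_axioms (gval B, gval E, gval E, restrict E id))
  (btensor_axioms C (gen_biset_axioms (gval E, gval C, gval C, f))
    (gen_biset_axioms (gval C, gval A, gval C, restrict C id))).
by rewrite (bclass_transitive bX _ basis_point_dom basis_word_transitive) basis_word_bstab.
Qed.

End BasisWord.

Section BasisVectors.
Variables (gT : finGroupType) (S : {group gT}) (F : {set fus_triple gT}).
Variables (crep : {set gT} -> {set {set gT}})
  (phirep : {set gT} -> {set gT} -> {set gT} -> {set {ffun gT -> gT}}).
Hypotheses (fusF : is_fusion_system S F) (crepS : crep_system S crep)
  (phirepS : phirep_system S F crep phirep).
Variable R : comPzRingType.
Local Notation I := (basis_index S crep phirep).
Local Open Scope ring_scope.

Lemma bvecE A B C f : (A, B, C, f) \in I ->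
  bvec R (A, B, C, f) = transitive_bclass R B A (twdiag C f).
Proof.
move=> iI; have [gA gB _ _ _] := basis_indexP iI.
have [gC sCA Ff] := basis_index_fusion crepS phirepS iI.
have [_ gfC _ _ _] := fusion_morP fusF (fusion_image fusF Ff).
have [_ _ _ _ /and4P [sfCB _ _ _]] := fusion_morP fusF Ff.
rewrite /bvec /wval /basis_word (_ : path _ _ _ = true); last by rewrite /= !eqxx.
exact: (bclass_basis_word (A := Group gA) (B := Group gB) (C := Group gC)
  (fusion_hom fusF Ff) sCA gfC sfCB).
Qed.

Definition basis_class_of (H K : {set gT}) (L : {set gT * gT}) (i : bidx gT) :=
  [&& i.1.1.1 == K, i.1.1.2 == H & L \in twdiag i.1.2 i.2 :^: setX H K].

Lemma card_basis_class_le1 (H K : {group gT}) L :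
  (#|[set i in I | basis_class_of H K L i]| <= 1)%N.
Proof.
apply/card_le1_eqP => -[[[A B] C] f] [[[A' B'] C'] f'].
move=> /setIdP [iI /and3P [/eqP AK /eqP BH LCf]].
move=> /setIdP [i'I /and3P [/eqP A'K /eqP B'H LC'f']].
rewrite /= in AK BH A'K B'H LCf LC'f'; subst A B A' B'.
suff [-> ->] : C' = C /\ f' = f by [].
apply: (basis_twdiag_uniq fusF crepS phirepS i'I iI).
by rewrite -!orbitJs in LC'f' *; rewrite -(orbit_transl _ LC'f').
Qed.

Lemma basis_class_nb_type (H K : {group gT}) X L : H \subset S -> K \subset S ->
  biset_axioms X -> twisted_stabilizers F H K X -> nb_type H K X L != 0%N ->
  exists2 i, i \in I & basis_class_of H K L i.
Proof.
move=> sHS sKS bX stX /(nb_type_neq0 bX) [x Dx Lx].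
have [D [t [Ft stx]]] := stX x Dx.
have sDK : D \subset K.
  apply/subsetP => d Dd; have /mem_bstab_setX : (t d, d) \in bstab H K x by rewrite stx imset_f.
  by rewrite inE => /andP [].
have [C [f [iI Cf]]] := basis_twdiag_exists fusF crepS phirepS sHS sKS Ft sDK.
exists (gval K, gval H, C, f); rewrite // /basis_class_of !eqxx /=.
rewrite stx -!orbitJs in Lx Cf *; rewrite orbit_sym in Cf.
exact: orbit_trans Lx Cf.
Qed.

Lemma bclass_sum_bvec (H K : {group gT}) X : H \subset S -> K \subset S ->
  biset_axioms X -> twisted_stabilizers F H K X ->
  bclass R H K X = \sum_(i in I) (if (i.1.1.1 == gval K) && (i.1.1.2 == gval H)
     then (nb_type H K X (twdiag i.1.2 i.2))%:R else 0) *: bvec R i.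
Proof.
move=> sHS sKS bX stX; apply/ffunP => -[[H' K'] L]; rewrite sum_ffunE ffunE /=.
pose P := [set i in I | basis_class_of H K L i].
have termE i : i \in I -> ((if (i.1.1.1 == gval K) && (i.1.1.2 == gval H)
     then (nb_type H K X (twdiag i.1.2 i.2))%:R else 0) *: bvec R i) (H', K', L)
   = if (H' == gval H) && (K' == gval K) && (i \in P) then (nb_type H K X L)%:R else 0.
  case: i => [[[A B] C] f] iI; rewrite (bvecE iI) !ffunE inE iI /basis_class_of /=.
  case: (A =P _) => [->|_]; last by rewrite scale0r !andbF.
  case: (B =P _) => [->|_]; last by rewrite scale0r !andbF.
  rewrite /=; case: (_ && _); last by rewrite scaler0.
  case LCf: (L \in _); last by rewrite scaler0.
  by rewrite (nb_type_conj X LCf) [_ *: _]mulr1.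
rewrite (eq_bigr _ termE); case: ((H' == gval H) && (K' == gval K)); last by rewrite big1.
(* [P] has at most one element, and is empty only if no orbit has type [L]. *)
rewrite -big_mkcondr /= (eq_bigl (fun i => i \in P)) => [|i]; last first.
  by rewrite andb_idl // => /setIdP [].
rewrite /= sumr_const -mulrnA; congr (_%:R).
have := card_basis_class_le1 H K L; rewrite leq_eqVlt ltnS leqn0.
case/orP => [/eqP ->|/eqP/cards0_eq P0]; first by rewrite muln1.
case: (eqVneq (nb_type H K X L) 0%N) => [->//|/(basis_class_nb_type sHS sKS bX stX)].
by case=> i iI iL; have := in_set0 i; rewrite -P0 inE iI iL.
Qed.

Lemma bvec_in_mu i : i \in I -> in_mu S F (bvec R i).
Proof.
case: i => [[[A B] C] f] iI; have [gA gB sAS sBS _] := basis_indexP iI.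
have [gC sCA Ff] := basis_index_fusion crepS phirepS iI.
have [_ gfC _ _ _] := fusion_morP fusF (fusion_image fusF Ff).
have [_ _ _ _ /and4P [sfCB _ _ _]] := fusion_morP fusF Ff.
exists [:: (1, basis_word (A, B, C, f))]; split; last by rewrite big_seq1 scale1r.
move=> q g; rewrite inE => /eqP -> /=; rewrite !inE => /or3P [] /eqP ->.
- by left; exists (f @: C), B; split.
- by right; right; exists C, f; split; first exact: (fusion_image fusF Ff).
- by right; left; exists C, A; split.
Qed.

Lemma bvec_free (c : bidx gT -> R) : \sum_(i in I) c i *: bvec R i = 0 ->
  forall i, i \in I -> c i = 0.
Proof.
move=> c0 [[[A B] C] f] iI; have [gA gB _ _ _] := basis_indexP iI.
have /esym := congr1 (fun v : coordT gT R => v (B, A, twdiag C f)) c0.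
rewrite sum_ffunE ffunE (bigD1 (A, B, C, f)) //= big1 => [|i' /andP [i'I i'ne]].
  have Cf_refl : twdiag C f \in twdiag C f :^: setX (Group gB) (Group gA).
    by rewrite -orbitJs orbit_refl.
  by rewrite ffunE bvecE // ffunE !eqxx /= Cf_refl [_ *: _]mulr1 addr0.
move: i' i'I i'ne => [[[A' B'] C'] f'] i'I i'ne; rewrite ffunE bvecE // ffunE /=.
case: (B =P B') => [eB|_]; last by rewrite scaler0.
case: (A =P A') => [eA|_] /=; last by rewrite scaler0.
subst B' A'.
case Cf: (_ \in _); last by rewrite scaler0.
have [eC ef] := basis_twdiag_uniq fusF crepS phirepS iI i'I Cf.
by move: i'ne; rewrite eC ef eqxx.
Qed.

Lemma wval_span w : {in w, forall g, isGen S F g} ->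
  exists c : bidx gT -> R, wval R w = \sum_(i in I) c i *: bvec R i.
Proof.
have zero : exists c : bidx gT -> R, 0 = \sum_(i in I) c i *: bvec R i.
  by exists (fun => 0); rewrite big1 // => i _; rewrite scale0r.
case: w => [|g w] genw /=; first exact: zero.
case: ifP => [pw|_]; last exact: zero.
have [H [K [-> -> [sHS sKS] bX stX]]] := wbiset_twisted_stabilizers fusF genw pw.
by rewrite (bclass_sum_bvec sHS sKS bX stX); eexists.
Qed.

Lemma in_mu_span v : in_mu S F v ->
  exists c : bidx gT -> R, v = \sum_(i in I) c i *: bvec R i.
Proof.
case=> s [gens ->]; elim: s gens => [|q s IHs] gens.
  by exists (fun => 0); rewrite big_nil big1 // => i _; rewrite scale0r.
rewrite big_cons; have [c1 ->] := wval_span (gens q ^~ (mem_head q s)).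
have [c2 ->] : exists c, \sum_(q <- s) q.1 *: wval R q.2 = \sum_(i in I) c i *: bvec R i.
  by apply: IHs => q' g q's; apply: gens; rewrite inE q's orbT.
exists (fun i => q.1 * c1 i + c2 i); rewrite scaler_sumr -big_split /=.
by apply: eq_bigr => i _; rewrite scalerDl scalerA.
Qed.

End BasisVectors.

Unset Implicit Arguments.
Local Open Scope ring_scope.

Theorem proposition2p24 (gT : finGroupType) (p : nat) (S : {group gT})
    (F : {set fus_triple gT}) (R : comPzRingType)
    (crep : {set gT} -> {set {set gT}})
    (phirep : {set gT} -> {set gT} -> {set gT} -> {set {ffun gT -> gT}}) :
  prime p -> (p.-group S)%g -> is_fusion_system S F -> saturated p S F ->
  crep_system S crep -> phirep_system S F crep phirep ->
  let I := basis_index S crep phirep in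
  [/\ (forall i, i \in I -> in_mu S F (bvec R i)),
      (forall c : bidx gT -> R, \sum_(i in I) c i *: bvec R i = 0 ->
         forall i, i \in I -> c i = 0),
      (forall v, in_mu S F v -> exists c : bidx gT -> R, v = \sum_(i in I) c i *: bvec R i) &
      (exists n (g : 'I_n -> coordT gT R), (forall k, in_mu S F (g k)) /\
         forall v, in_mu S F v -> exists c : 'I_n -> R, v = \sum_k c k *: g k)].
Proof.
move=> _ _ fusF _ crepS phirepS I.
have bvec_mu := bvec_in_mu fusF crepS phirepS R.
have span := in_mu_span fusF crepS phirepS (R := R).
split=> //; first by move=> c /(bvec_free fusF crepS phirepS).
exists #|I|, (fun k => bvec R (enum_val k)); split=> [k|v /span [c ->]].
  exact/bvec_mu/enum_valP.
by exists (fun k => c (enum_val k)); rewrite big_enum_val.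
Qed.
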